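(* For all integers $a,b\ge2$, the first Poisson cohomology $HP^1(\Lambda(a,b))$ (Poisson derivations modulo Hamiltonian derivations $\{\lambda,-\}$) is $2$-dimensional with basis the classes of $d_{1,0}$ and $d'_{0,1}$, where $d_{1,0}$ is the derivation with $d_{1,0}(X)=X$, $d_{1,0}(Y)=0$ and $d'_{0,1}$ is the derivation with $d'_{0,1}(X)=0$, $d'_{0,1}(Y)=Y$.
   Context: For integers $a,b\geq 2$, $\Lambda(a,b):=\mathbb C[X,Y]/(X^a,Y^b)$ with basis $X^iY^j$ ($0\le i\le a-1$, $0\le j\le b-1$) and Poisson bracket determined by $\{X,Y\}=XY$ (a skew-symmetric biderivation); equivalently $\{X^iY^j,X\}=-jX^{i+1}Y^j$, $\{X^iY^j,Y\}=iX^iY^{j+1}$. A Poisson derivation is a $\mathbb C$-linear derivation $d$ of $\Lambda(a,b)$ with $d\{f,g\}=\{df,g\}+\{f,dg\}$ for all $f,g$; Hamiltonian derivations are those of the form $\{\lambda,-\}$. $HP^1(\Lambda(a,b))$ is the quotient of Poisson derivations by Hamiltonian ones. *)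

From HB Require Import structures.
From mathcomp Require Import all_boot all_order all_algebra.
Set Implicit Arguments. Unset Strict Implicit. Unset Printing Implicit Defensive.
Import Order.TTheory GRing.Theory Num.Theory.
Local Open Scope ring_scope.

(* Lambda(a,b) = C[X,Y]/(X^a,Y^b); an element f is encoded by the a x b matrix
   of its coefficients: f = \sum_(i<a, j<b) f i j X^i Y^j. *)
Definition Lam (C : numClosedFieldType) (a b : nat) := 'M[C]_(a, b).

Section Lambda.
Variables (C : numClosedFieldType) (a b : nat).

(* the monomial X^i Y^j (equal to 0 when i >= a or j >= b) *)
Definition mono (i j : nat) : Lam C a b :=
  \matrix_(k < a, l < b) ((k == i :> nat) && (l == j :> nat))%:R.

Definition varX : Lam C a b := mono 1 0.
Definition varY : Lam C a b := mono 0 1.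

(* truncated product: X^i1 Y^j1 * X^i2 Y^j2 = X^(i1+i2) Y^(j1+j2) *)
Definition lmul (f g : Lam C a b) : Lam C a b :=
  \matrix_(i < a, j < b)
    \sum_(i1 < a) \sum_(j1 < b) \sum_(i2 < a) \sum_(j2 < b)
      if (((i1 + i2)%N == i :> nat) && ((j1 + j2)%N == j :> nat))
      then f i1 j1 * g i2 j2 else 0.

(* Poisson bracket determined by {X,Y} = XY (skew biderivation):
   {X^i1 Y^j1, X^i2 Y^j2} = (i1 j2 - j1 i2) X^(i1+i2) Y^(j1+j2). *)
Definition lbr (f g : Lam C a b) : Lam C a b :=
  \matrix_(i < a, j < b)
    \sum_(i1 < a) \sum_(j1 < b) \sum_(i2 < a) \sum_(j2 < b)
      if (((i1 + i2)%N == i :> nat) && ((j1 + j2)%N == j :> nat))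
      then ((i1 * j2)%N%:R - (j1 * i2)%N%:R) * (f i1 j1 * g i2 j2) else 0.

Definition is_derivation (d : Lam C a b -> Lam C a b) : Prop :=
  (forall (c : C) (f g : Lam C a b), d (c *: f + g) = c *: d f + d g) /\
  (forall f g : Lam C a b, d (lmul f g) = lmul (d f) g + lmul f (d g)).

Definition is_poisson_derivation (d : Lam C a b -> Lam C a b) : Prop :=
  is_derivation d /\
  (forall f g : Lam C a b, d (lbr f g) = lbr (d f) g + lbr f (d g)).

Definition ham (lam : Lam C a b) : Lam C a b -> Lam C a b := fun f => lbr lam f.

(* d_{1,0} = X d/dX : X^i Y^j |-> i X^i Y^j ;  d'_{0,1} = Y d/dY : X^i Y^j |-> j X^i Y^j *)
Definition d10 (f : Lam C a b) : Lam C a b := \matrix_(i < a, j < b) (i%:R * f i j).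
Definition d01 (f : Lam C a b) : Lam C a b := \matrix_(i < a, j < b) (j%:R * f i j).

End Lambda.

(* Both the product and the bracket of Lambda(a,b) are "twisted convolutions"
     conv w f g = sum w(i1,j1,i2,j2) f_(i1,j1) g_(i2,j2) X^(i1+i2) Y^(j1+j2),
   with weight w = 1 for the product and w = i1 j2 - j1 i2 for the bracket.

   Weighted Euler operators f |-> sum w(i,j) f_(i,j) X^i Y^j with w additive are
   derivations of every twisted convolution, hence Poisson derivations; d10 and
   d01 are of this form.  Hamiltonians {lam,-} are derivations, and a derivation
   is determined by its values on X and Y.

   Spanning: for a Poisson derivation d put p = dX, q = dY.  Applying d to
   XY = {X,Y} gives m' p_(m'+1,n') + n' q_(m',n'+1) = 0, and applying the
   Leibniz rule for powers to X^a = 0 and Y^b = 0 gives p_(0,l) = q_(k,0) = 0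
   (characteristic 0).  These relations let us solve dX = alpha X + {lam,X} and
   dY = beta Y + {lam,Y} for an explicit lam, so d = alpha d10 + beta d01 + {lam,-}.
   Independence: {lam,X} has no X-coefficient and {lam,Y} no Y-coefficient, so
   alpha d10 + beta d01 = {lam,-} forces alpha = beta = 0. *)

From HB Require Import structures.
From mathcomp Require Import all_boot all_order all_algebra ring.
Set Implicit Arguments. Unset Strict Implicit. Unset Printing Implicit Defensive.
Import GRing.Theory Num.Theory.
Local Open Scope ring_scope.

Lemma insubd_succ n (k' k : 'I_n) : (k' + 1 = k)%N -> insubd k' k'.+1 = k.
Proof. by move=> Hk; apply: val_inj; rewrite val_insubd -[k'.+1]addn1 Hk ltn_ord. Qed.

Section TruncatedPolynomials.
Variables (C : numClosedFieldType) (a b : nat).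
Local Notation L := (Lam C a b).
Local Notation mono := (@mono C a b).
Local Notation lmul := (@lmul C a b).
Local Notation lbr := (@lbr C a b).
Local Notation X := (varX C a b).
Local Notation Y := (varY C a b).
Local Notation is_derivation := (@is_derivation C a b).
Local Notation is_poisson_derivation := (@is_poisson_derivation C a b).

Definition lin (d : L -> L) : Prop :=
  forall (c : C) (f g : L), d (c *: f + g) = c *: d f + d g.

Lemma lin0 d : lin d -> d 0 = 0.
Proof.
move=> H; have := H 1 0 0; rewrite scaler0 addr0 scale1r => h.
by apply: (addrI (d 0)); rewrite addr0 -h.
Qed.

Lemma linD d : lin d -> forall f g, d (f + g) = d f + d g.
Proof. by move=> H f g; have := H 1 f g; rewrite !scale1r. Qed.

Lemma linZ d : lin d -> forall c f, d (c *: f) = c *: d f.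
Proof. by move=> H c f; have := H c f 0; rewrite !addr0 lin0 // addr0. Qed.

Lemma lin_sum d : lin d -> forall (I : Type) (r : seq I) (P : pred I) (F : I -> L),
  d (\sum_(i <- r | P i) F i) = \sum_(i <- r | P i) d (F i).
Proof. by move=> H I r P F; apply: (big_morph d (linD H) (lin0 H)). Qed.

Lemma lin_add d e : lin d -> lin e -> lin (fun f => d f + e f).
Proof. by move=> Hd He c f g; rewrite Hd He scalerDr addrACA. Qed.

Lemma lin_comp d e : lin d -> lin e -> lin (fun f => d (e f)).
Proof. by move=> Hd He c f g; rewrite He Hd. Qed.

Lemma lin_scale d c : lin d -> lin (fun f => c *: d f).
Proof. by move=> Hd c' f g; rewrite Hd scalerDr !scalerA mulrC. Qed.

Lemma mono_out i j : (a <= i)%N || (b <= j)%N -> mono i j = 0.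
Proof.
move=> H; apply/matrixP => k l; rewrite !mxE.
case: eqP => [ki|]; case: eqP => [lj|] //=.
by move: H; rewrite -ki -lj => /orP[]; rewrite leqNgt ltn_ord.
Qed.

Lemma mono_outD i j k l : (a <= i)%N || (b <= j)%N -> mono (i + k) (j + l) = 0.
Proof.
move=> /orP[ai|bj]; apply: mono_out.
  by rewrite (leq_trans ai (leq_addr _ _)).
by rewrite (leq_trans bj (leq_addr _ _)) orbT.
Qed.

Lemma expand (f : L) : f = \sum_(i < a) \sum_(j < b) f i j *: mono i j.
Proof.
rewrite {1}(matrix_sum_delta f); apply: eq_bigr => i _; apply: eq_bigr => j _.
by congr (_ *: _); apply/matrixP => k l; rewrite !mxE.
Qed.

Lemma ext_mono d e : lin d -> lin e ->
  (forall (i : 'I_a) (j : 'I_b), d (mono i j) = e (mono i j)) -> forall f, d f = e f.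
Proof.
move=> Hd He H f; rewrite (expand f) !lin_sum //; apply: eq_bigr => i _.
by rewrite !lin_sum //; apply: eq_bigr => j _; rewrite !linZ // H.
Qed.

Lemma entryD (A B : L) i j : (A + B) i j = A i j + B i j.
Proof. by rewrite mxE. Qed.

Lemma entryZ c (A : L) i j : (c *: A) i j = c * A i j.
Proof. by rewrite mxE. Qed.

Lemma entryN (A : L) i j : (- A) i j = - A i j.
Proof. by rewrite mxE. Qed.

Lemma natr_mulI (k : nat) (x : C) : k != 0%N -> k%:R * x = 0 -> x = 0.
Proof. by move=> k0 /eqP; rewrite mulf_eq0 pnatr_eq0 (negbTE k0) => /eqP. Qed.

Lemma solve_linear (u v x y : C) : v != 0 -> u * x + v * y = 0 -> y = u * (- x / v).
Proof.
move=> v0 E; have Ey : v * y = - (u * x) by apply/eqP; rewrite -addr_eq0 addrC E.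
by rewrite -[y](mulKf v0) Ey; ring.
Qed.

Definition conv (w : nat -> nat -> nat -> nat -> C) (f g : L) : L :=
  \matrix_(i < a, j < b)
    \sum_(i1 < a) \sum_(j1 < b) \sum_(i2 < a) \sum_(j2 < b)
      if (((i1 + i2)%N == i :> nat) && ((j1 + j2)%N == j :> nat))
      then w i1 j1 i2 j2 * (f i1 j1 * g i2 j2) else 0.

Definition brw (i1 j1 i2 j2 : nat) : C := (i1 * j2)%N%:R - (j1 * i2)%N%:R.

Lemma lbr_conv : lbr = conv brw.
Proof. by rewrite /conv /brw. Qed.

Lemma lmul_conv f g : lmul f g = conv (fun _ _ _ _ => 1) f g.
Proof.
apply/matrixP => i j; rewrite !mxE.
by do 4!(apply: eq_bigr => ? _); rewrite mul1r.
Qed.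

Lemma convL_lin w h : lin (fun f => conv w f h).
Proof.
move=> c f g; apply/matrixP => i j; rewrite !mxE.
do 4!(rewrite mulr_sumr -big_split; apply: eq_bigr => ? _).
by rewrite !mxE /=; case: ifP => _; rewrite ?mulr0 ?addr0 //; ring.
Qed.

Lemma convR_lin w h : lin (fun g => conv w h g).
Proof.
move=> c f g; apply/matrixP => i j; rewrite !mxE.
do 4!(rewrite mulr_sumr -big_split; apply: eq_bigr => ? _).
by rewrite !mxE /=; case: ifP => _; rewrite ?mulr0 ?addr0 //; ring.
Qed.

Lemma sum_pick n (x : 'I_n) (F : 'I_n -> C) :
  \sum_(y < n) (y == x :> nat)%:R * F y = F x.
Proof.
rewrite (bigD1 x) //= eqxx mul1r big1 ?addr0 // => y ne.
by rewrite (_ : (y == x :> nat) = false) ?mul0r //; apply/negbTE.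
Qed.

Lemma sum_indicator n (x : nat) (c : C) : (x < n)%N ->
  \sum_(y < n) (y == x :> nat)%:R * c = c.
Proof. by move=> xn; exact: (sum_pick (Ordinal xn) (fun _ => c)). Qed.

Lemma conv_mono w i j k l :
  conv w (mono i j) (mono k l) = w i j k l *: mono (i + k) (j + l).
Proof.
have [/andP[ia jb]|] := boolP ((i < a) && (j < b))%N; last first.
  rewrite negb_and -!leqNgt => out.
  by rewrite mono_out // (lin0 (convL_lin _ _)) mono_outD // scaler0.
have [/andP[ka lb]|] := boolP ((k < a) && (l < b))%N; last first.
  rewrite negb_and -!leqNgt => out.
  by rewrite [mono k l]mono_out // (lin0 (convR_lin _ _)) addnC [(j + l)%N]addnC mono_outD // scaler0.
apply/matrixP => m n; rewrite !mxE.
pose R : C := if ((i + k)%N == m :> nat) && ((j + l)%N == n :> nat) then w i j k l else 0.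
transitivity (\sum_(i1 < a) (i1 == i :> nat)%:R * \sum_(j1 < b) (j1 == j :> nat)%:R *
  \sum_(i2 < a) (i2 == k :> nat)%:R * \sum_(j2 < b) (j2 == l :> nat)%:R * R).
  apply: eq_bigr => i1 _; rewrite !mulr_sumr; apply: eq_bigr => j1 _.
  rewrite !mulr_sumr; apply: eq_bigr => i2 _; rewrite !mulr_sumr; apply: eq_bigr => j2 _.
  rewrite !mxE /R.
  case: (eqVneq (i1 : nat) i) => [->|_]; last by rewrite /= !mul0r mulr0 if_same.
  case: (eqVneq (j1 : nat) j) => [->|_]; last by rewrite andbF /= !(mul0r, mulr0) if_same.
  case: (eqVneq (i2 : nat) k) => [->|_]; last by rewrite /= !(mul0r, mulr0) if_same.
  case: (eqVneq (j2 : nat) l) => [->|_]; last by rewrite andbF /= !(mul0r, mulr0) if_same.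
  by rewrite /= !mul1r mulr1.
by rewrite !sum_indicator // /R eq_sym [(_ + _)%N == n]eq_sym; case: ifP; rewrite ?mulr1 ?mulr0.
Qed.

Lemma conv_suml w h (I : Type) (r : seq I) (P : pred I) (F : I -> L) :
  conv w (\sum_(i <- r | P i) F i) h = \sum_(i <- r | P i) conv w (F i) h.
Proof. exact: (lin_sum (convL_lin w h)). Qed.

Lemma conv_shift w f s t :
  conv w f (mono s t) = \sum_(i < a) \sum_(j < b) (w i j s t * f i j) *: mono (i + s) (j + t).
Proof.
rewrite {1}(expand f) conv_suml; apply: eq_bigr => i _.
rewrite conv_suml; apply: eq_bigr => j _.
by rewrite (linZ (convL_lin _ _)) conv_mono scalerA mulrC.
Qed.

Lemma conv_monoE w f s t (m' m : 'I_a) (n' n : 'I_b) :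
  (m' + s = m)%N -> (n' + t = n)%N -> conv w f (mono s t) m n = w m' n' s t * f m' n'.
Proof.
move=> Hm Hn; rewrite conv_shift summxE.
transitivity (\sum_(i < a) (i == m' :> nat)%:R *
  \sum_(j < b) (j == n' :> nat)%:R * (w i j s t * f i j)); last by rewrite !sum_pick.
apply: eq_bigr => i _; rewrite summxE mulr_sumr; apply: eq_bigr => j _.
rewrite !mxE -Hm -Hn !eqn_add2r [(m' : nat) == _]eq_sym [(n' : nat) == _]eq_sym.
by rewrite -mulnb natrM; ring.
Qed.

Lemma conv_monoE0 w f s t (m : 'I_a) (n : 'I_b) :
  ~~ ((s <= m)%N && (t <= n)%N) -> conv w f (mono s t) m n = 0.
Proof.
move=> H; rewrite conv_shift summxE big1 // => i _; rewrite summxE big1 // => j _.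
rewrite !mxE; case: eqP => [Hm|]; case: eqP => [Hn|] //=; rewrite ?mulr0 //.
by move: H; rewrite Hm Hn !leq_addl.
Qed.

Lemma conv_comm w e : (forall i1 j1 i2 j2, w i1 j1 i2 j2 = e * w i2 j2 i1 j1) ->
  forall f g, conv w f g = e *: conv w g f.
Proof.
move=> we f g.
apply: (@ext_mono (fun g => conv w f g) (fun g => e *: conv w g f));
  [exact: convR_lin | exact/lin_scale/convL_lin |] => i j.
apply: (@ext_mono (fun f => conv w f _) (fun f => e *: conv w _ f));
  [exact: convL_lin | exact/lin_scale/convR_lin |] => k l.
by rewrite !conv_mono scalerA -we addnC [(l + _)%N]addnC.
Qed.

Lemma lmulL_lin h : lin (fun f => lmul f h).
Proof. by move=> c f g; rewrite !lmul_conv; exact: convL_lin. Qed.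

Lemma lmulR_lin h : lin (fun g => lmul h g).
Proof. by move=> c f g; rewrite !lmul_conv; exact: convR_lin. Qed.

Lemma lbrL_lin h : lin (fun f => lbr f h).
Proof. rewrite lbr_conv; exact: convL_lin. Qed.

Lemma lbrR_lin h : lin (fun g => lbr h g).
Proof. rewrite lbr_conv; exact: convR_lin. Qed.

Lemma lmul_mono i j k l : lmul (mono i j) (mono k l) = mono (i + k) (j + l).
Proof. by rewrite lmul_conv conv_mono scale1r. Qed.

Lemma lbr_mono i j k l :
  lbr (mono i j) (mono k l) = ((i * l)%N%:R - (j * k)%N%:R) *: mono (i + k) (j + l).
Proof. by rewrite lbr_conv conv_mono. Qed.

Lemma lmulC f g : lmul f g = lmul g f.
Proof. by rewrite !lmul_conv (@conv_comm _ 1) ?scale1r // => *; rewrite mul1r. Qed.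

Lemma lbrN f g : lbr f g = - lbr g f.
Proof.
rewrite lbr_conv (@conv_comm _ (-1)) ?scaleN1r // => i1 j1 i2 j2.
by rewrite /brw mulN1r opprB [(j2 * i1)%N]mulnC [(i2 * j1)%N]mulnC.
Qed.

Lemma lmulE f s t (m' m : 'I_a) (n' n : 'I_b) :
  (m' + s = m)%N -> (n' + t = n)%N -> lmul f (mono s t) m n = f m' n'.
Proof. by move=> Hm Hn; rewrite lmul_conv (conv_monoE _ _ Hm Hn) mul1r. Qed.

Lemma lbrE f s t (m' m : 'I_a) (n' n : 'I_b) :
  (m' + s = m)%N -> (n' + t = n)%N ->
  lbr f (mono s t) m n = ((m' * t)%N%:R - (n' * s)%N%:R) * f m' n'.
Proof. by move=> Hm Hn; rewrite lbr_conv (conv_monoE _ _ Hm Hn). Qed.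

Lemma lbrE0 f s t (m : 'I_a) (n : 'I_b) :
  ~~ ((s <= m)%N && (t <= n)%N) -> lbr f (mono s t) m n = 0.
Proof. by rewrite lbr_conv; exact: conv_monoE0. Qed.

Lemma lmul1 f : lmul f (mono 0 0) = f.
Proof.
apply: (@ext_mono (fun f => lmul f (mono 0 0)) id); [exact: lmulL_lin | by [] |] => i j.
by rewrite lmul_mono !addn0.
Qed.

Lemma lmul_monoA f i j k l :
  lmul (lmul f (mono i j)) (mono k l) = lmul f (mono (i + k) (j + l)).
Proof.
apply: (@ext_mono (fun f => lmul (lmul f _) _) (fun f => lmul f _));
  [exact: lin_comp (lmulL_lin _) (lmulL_lin _) | exact: lmulL_lin |] => u v.
by rewrite !lmul_mono !addnA.
Qed.

Lemma der_add d e : is_derivation d -> is_derivation e ->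
  is_derivation (fun f => d f + e f).
Proof.
move=> [ld Ld] [le Le]; split; first exact: lin_add.
by move=> f g; rewrite Ld Le (linD (lmulL_lin _)) (linD (lmulR_lin _)) addrACA.
Qed.

Lemma der_scale d c : is_derivation d -> is_derivation (fun f => c *: d f).
Proof.
move=> [ld Ld]; split; first exact: lin_scale.
by move=> f g; rewrite Ld scalerDr (linZ (lmulL_lin _)) (linZ (lmulR_lin _)).
Qed.

(* Hamiltonians are derivations: the identity {lam, fg} = {lam,f} g + f {lam,g}
   is trilinear, so it suffices to check it on monomials. *)
Lemma ham_der lam : is_derivation (ham lam).
Proof.
split; first exact: lbrR_lin.
move=> f g; rewrite /ham.
apply: (@ext_mono (fun g => lbr lam (lmul f g))
                  (fun g => lmul (lbr lam f) g + lmul f (lbr lam g)));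
  [exact: lin_comp (lbrR_lin _) (lmulR_lin _)
  | exact: lin_add (lmulR_lin _) (lin_comp (lmulR_lin _) (lbrR_lin _)) |] => k l.
apply: (@ext_mono (fun f => lbr lam (lmul f (mono k l)))
                  (fun f => lmul (lbr lam f) (mono k l) + lmul f (lbr lam (mono k l))));
  [exact: lin_comp (lbrR_lin _) (lmulL_lin _)
  | exact: lin_add (lin_comp (lmulL_lin _) (lbrR_lin _)) (lmulL_lin _) |] => i j.
apply: (@ext_mono (fun lam => lbr lam (lmul (mono i j) (mono k l)))
                  (fun lam => lmul (lbr lam (mono i j)) (mono k l)
                              + lmul (mono i j) (lbr lam (mono k l))));
  [exact: lbrL_lin
  | exact: lin_add (lin_comp (lmulL_lin _) (lbrL_lin _)) (lin_comp (lmulR_lin _) (lbrL_lin _)) |]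
  => u v.
rewrite lmul_mono !lbr_mono (linZ (lmulL_lin _)) (linZ (lmulR_lin _)) !lmul_mono.
rewrite !addnA [(i + u)%N]addnC [(j + v)%N]addnC -scalerDl.
by congr (_ *: _); rewrite !mulnDr !natrD; ring.
Qed.

Definition dw (w : nat -> nat -> C) (f : L) : L := \matrix_(i < a, j < b) (w i j * f i j).

Lemma dw_conv w v : (forall i1 j1 i2 j2, w (i1 + i2)%N (j1 + j2)%N = w i1 j1 + w i2 j2) ->
  forall f g, dw w (conv v f g) = conv v (dw w f) g + conv v f (dw w g).
Proof.
move=> wadd f g; apply/matrixP => i j; rewrite !mxE.
do 4!(rewrite mulr_sumr -big_split /=; apply: eq_bigr => ? _).
rewrite !mxE; case: ifP => [/andP[/eqP <- /eqP <-]|_]; rewrite ?mulr0 ?addr0 //.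
by rewrite wadd; ring.
Qed.

Lemma dw_pd w : (forall i1 j1 i2 j2, w (i1 + i2)%N (j1 + j2)%N = w i1 j1 + w i2 j2) ->
  is_poisson_derivation (dw w).
Proof.
move=> wadd; split; [split|].
- by move=> c f g; apply/matrixP => i j; rewrite !mxE; ring.
- by move=> f g; rewrite !lmul_conv dw_conv.
- by move=> f g; rewrite lbr_conv dw_conv.
Qed.

Lemma dw_mono w i j : dw w (mono i j) = w i j *: mono i j.
Proof.
apply/matrixP => k l; rewrite !mxE.
by case: eqP => [->|_]; case: eqP => [->|_]; rewrite /= ?mulr0 ?mulr1.
Qed.

Lemma der_unit d : is_derivation d -> d (mono 0 0) = 0.
Proof.
move=> [_ Ld]; have := Ld (mono 0 0) (mono 0 0).
rewrite !lmul1 lmulC lmul1 => H.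
by apply: (addrI (d (mono 0 0))); rewrite addr0 -H.
Qed.

Lemma der_unique d e : is_derivation d -> is_derivation e ->
  d X = e X -> d Y = e Y -> forall f, d f = e f.
Proof.
move=> dd de dX dY; apply: (ext_mono dd.1 de.1) => i j.
have dmono0 l : d (mono 0 l) = e (mono 0 l).
  elim: l => [|l IH]; first by rewrite !der_unit.
  have -> : mono 0 l.+1 = lmul Y (mono 0 l) by rewrite lmul_mono.
  by rewrite dd.2 de.2 dY IH.
elim: (nat_of_ord i) => [|k IH]; first exact: dmono0.
have -> : mono k.+1 j = lmul X (mono k j) by rewrite lmul_mono.
by rewrite dd.2 de.2 dX IH.
Qed.

Lemma der_pow d : is_derivation d -> forall n s t,
  d (mono (n.+1 * s) (n.+1 * t)) = n.+1%:R *: lmul (d (mono s t)) (mono (n * s) (n * t)).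
Proof.
move=> [_ Ld] n s t; elim: n => [|n IH]; first by rewrite !mul1n !mul0n lmul1 scale1r.
rewrite [(n.+2 * s)%N]mulSn [(n.+2 * t)%N]mulSn -lmul_mono Ld IH.
rewrite [lmul (mono s t) _]lmulC (linZ (lmulL_lin _)) lmul_monoA -!mulSnr.
by rewrite [n.+2%:R]mulrSr scalerDl scale1r addrC.
Qed.

(* If m^(n+1) = 0, the coefficients of dm that survive multiplication by m^n
   vanish (characteristic 0). *)
Lemma der_nilpotent d : is_derivation d -> forall n s t,
  mono (n.+1 * s) (n.+1 * t) = 0 ->
  forall (m' m : 'I_a) (l' l : 'I_b), (m' + n * s = m)%N -> (l' + n * t = l)%N ->
  d (mono s t) m' l' = 0.
Proof.
move=> dd n s t nil m' m l' l Hm Hl.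
have := congr1 (fun M : L => M m l) (der_pow dd n s t).
rewrite /= nil (lin0 dd.1) entryZ (lmulE _ Hm Hl) mxE => /esym.
exact: natr_mulI.
Qed.

Lemma d10_pd : is_poisson_derivation (@d10 C a b).
Proof. by apply: (@dw_pd (fun i _ => i%:R)) => *; rewrite natrD. Qed.

Lemma d01_pd : is_poisson_derivation (@d01 C a b).
Proof. by apply: (@dw_pd (fun _ j => j%:R)) => *; rewrite natrD. Qed.

Lemma d10X : d10 X = X.
Proof. by rewrite -[RHS]scale1r; exact: (dw_mono (fun i _ => i%:R) 1 0). Qed.

Lemma d10Y : d10 Y = 0.
Proof. by rewrite -(scale0r Y); exact: (dw_mono (fun i _ => i%:R) 0 1). Qed.

Lemma d01X : d01 X = 0.
Proof. by rewrite -(scale0r X); exact: (dw_mono (fun _ j => j%:R) 1 0). Qed.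

Lemma d01Y : d01 Y = Y.
Proof. by rewrite -[RHS]scale1r; exact: (dw_mono (fun _ j => j%:R) 0 1). Qed.

(* From now on a, b >= 2, so that X and Y are nonzero. *)
Section TwoGenerators.
Hypotheses (ha : (1 < a)%N) (hb : (1 < b)%N).

Let i0 : 'I_a := Ordinal (ltnW ha).
Let i1 : 'I_a := Ordinal ha.
Let j0 : 'I_b := Ordinal (ltnW hb).
Let j1 : 'I_b := Ordinal hb.

Lemma independence (alpha beta : C) (lam : L) :
  (forall f, alpha *: d10 f + beta *: d01 f = ham lam f) -> alpha = 0 /\ beta = 0.
Proof.
move=> H; split.
  have := congr1 (fun M : L => M i1 j0) (H X).
  rewrite /= d10X d01X scaler0 addr0 entryZ (lbrE _ (m' := i0) (n' := j0)) //.
  by rewrite mxE mulr1 muln0 subrr mul0r.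
have := congr1 (fun M : L => M i0 j1) (H Y).
rewrite /= d10Y d01Y scaler0 add0r entryZ (lbrE _ (m' := i0) (n' := j0)) //.
by rewrite mxE mulr1 muln0 subrr mul0r.
Qed.

Section Spanning.
Variable d : L -> L.
Hypothesis pd : is_poisson_derivation d.
Local Notation p := (d X).
Local Notation q := (d Y).

(* X^a = 0 and Y^b = 0 force p_(0,l) = 0 and q_(k,0) = 0. *)
Lemma dX_const (l : 'I_b) : p i0 l = 0.
Proof.
have top : (a.-1 < a)%N by rewrite prednK // ltnW.
apply: (@der_nilpotent d pd.1 a.-1 1 0 _ i0 (Ordinal top) l l).
- by apply: mono_out; rewrite muln1 prednK ?leqnn // ltnW.
- by rewrite /= muln1.
- by rewrite muln0 addn0.
Qed.

Lemma dY_const (k : 'I_a) : q k j0 = 0.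
Proof.
have top : (b.-1 < b)%N by rewrite prednK // ltnW.
apply: (@der_nilpotent d pd.1 b.-1 0 1 _ k k j0 (Ordinal top)).
- by apply: mono_out; rewrite muln1 prednK ?leqnn ?orbT // ltnW.
- by rewrite muln0 addn0.
- by rewrite /= muln1.
Qed.

(* d(XY) = d{X,Y} gives m' p_(m'+1,n') + n' q_(m',n'+1) = 0. *)
Lemma coef_relation (m' m : 'I_a) (n' n : 'I_b) : (m' + 1 = m)%N -> (n' + 1 = n)%N ->
  (m' : nat)%:R * p m n' + (n' : nat)%:R * q m' n = 0.
Proof.
move=> Hm Hn.
have XY : lmul p Y + lmul q X = lbr p Y - lbr q X.
  rewrite [lmul q X]lmulC -lbrN -pd.1.2 -pd.2; congr (d _).
  by rewrite lmul_mono lbr_mono /= subr0 scale1r.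
have := congr1 (fun M : L => M m n) XY; rewrite /= /varX /varY !entryD entryN.
rewrite (lmulE _ (addn0 m) Hn) (lmulE _ Hm (addn0 n)).
rewrite (lbrE _ (addn0 m) Hn) (lbrE _ Hm (addn0 n)) -Hm -Hn.
rewrite !muln1 !muln0 subr0 sub0r !natrD => E.
by apply: (addrI (p m n' + q m' n)); rewrite addr0 {2}E; ring.
Qed.

(* The solution: alpha = p_(1,0), beta = q_(0,1), and lam_(i,j) is read off
   from p_(i+1,j) = -j lam_(i,j) when possible, else from q_(i,j+1) = i lam_(i,j);
   coef_relation says the two readings agree where both apply. *)
Definition coefX : C := p i1 j0.
Definition coefY : C := q i0 j1.
Definition potential : L := \matrix_(i < a, j < b)
  if ((j : nat) != 0%N) && (i.+1 < a)%N then - p (insubd i i.+1) j / (j : nat)%:R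
  else if ((i : nat) != 0%N) && (j.+1 < b)%N then q i (insubd j j.+1) / (i : nat)%:R
  else 0.

Lemma span_X : p = coefX *: X + lbr potential X.
Proof.
apply/matrixP => k l; rewrite entryD entryZ [X k l]mxE.
have [k0|k_gt0] := posnP k.
  have -> : k = i0 by apply: val_inj.
  by rewrite lbrE0 // mulr0 add0r dX_const.
have k'a : (k.-1 < a)%N by rewrite (leq_ltn_trans (leq_pred k)).
have Hk : (Ordinal k'a + 1 = k)%N by rewrite addn1 prednK.
rewrite (lbrE _ Hk (addn0 l)) muln0 muln1 sub0r.
have [l0|l_gt0] := posnP l.
  have El : l = j0 by apply: val_inj.
  rewrite El /= oppr0 mul0r addr0 andbT.
  have [k1|k_ne1] := eqVneq (k : nat) 1%N.
    by rewrite mulr1 /coefX; congr (p _ _); apply: val_inj.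
  rewrite mulr0; apply: (natr_mulI (k := k.-1)).
    by move: k_ne1 k_gt0; case: (nat_of_ord k) => [|[|]].
  by have := coef_relation Hk (erefl : (j0 + 1 = j1)%N); rewrite mul0r addr0.
rewrite andbF mulr0 add0r.
rewrite /potential mxE (insubd_succ Hk) /= prednK // ltn_ord -lt0n l_gt0 /=.
by field; rewrite pnatr_eq0 -lt0n.
Qed.

Lemma span_Y : q = coefY *: Y + lbr potential Y.
Proof.
apply/matrixP => k l; rewrite entryD entryZ [Y k l]mxE.
have [l0|l_gt0] := posnP l.
  have -> : l = j0 by apply: val_inj.
  by rewrite lbrE0 //= andbF mulr0 add0r dY_const.
have l'b : (l.-1 < b)%N by rewrite (leq_ltn_trans (leq_pred l)).
have Hl : (Ordinal l'b + 1 = l)%N by rewrite addn1 prednK.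
rewrite (lbrE _ (addn0 k) Hl) muln1 muln0 subr0.
have [k0|k_gt0] := posnP k.
  have Ek : k = i0 by apply: val_inj.
  rewrite Ek /= mul0r addr0.
  have [l1|l_ne1] := eqVneq (l : nat) 1%N.
    by rewrite mulr1 /coefY; congr (q _ _); apply: val_inj.
  rewrite mulr0; apply: (natr_mulI (k := l.-1)).
    by move: l_ne1 l_gt0; case: (nat_of_ord l) => [|[|]].
  by have := coef_relation (erefl : (i0 + 1 = i1)%N) Hl; rewrite mul0r add0r.
rewrite /= mulr0 add0r.
rewrite /potential mxE (insubd_succ Hl) /=.
case: ifP => [/andP[l'0 ka] | _].
  have Hk : (k + 1 = Ordinal ka)%N by rewrite addn1.
  rewrite (insubd_succ Hk); apply: solve_linear; first by rewrite pnatr_eq0.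
  exact: coef_relation Hk Hl.
rewrite -lt0n k_gt0 prednK // ltn_ord /=.
by field; rewrite pnatr_eq0 -lt0n.
Qed.

Lemma spanning : exists (alpha beta : C) (lam : L),
  forall f, d f = alpha *: d10 f + beta *: d01 f + ham lam f.
Proof.
exists coefX, coefY, potential; apply: der_unique.
- exact: pd.1.
- apply: der_add (ham_der potential).
  exact: der_add (der_scale _ d10_pd.1) (der_scale _ d01_pd.1).
- by rewrite d10X d01X scaler0 addr0 {1}span_X.
- by rewrite d10Y d01Y scaler0 add0r {1}span_Y.
Qed.

End Spanning.
End TwoGenerators.

End TruncatedPolynomials.

Unset Implicit Arguments.

Theorem mainTheorem3 (C : numClosedFieldType) (a b : nat) :
  (2 <= a)%N -> (2 <= b)%N ->
  [/\ is_poisson_derivation (@d10 C a b) /\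
        d10 (varX C a b) = varX C a b /\ d10 (varY C a b) = 0,
      is_poisson_derivation (@d01 C a b) /\
        d01 (varX C a b) = 0 /\ d01 (varY C a b) = varY C a b,
      (forall d : Lam C a b -> Lam C a b, is_poisson_derivation d ->
         exists (alpha beta : C) (lam : Lam C a b),
           forall f, d f = alpha *: d10 f + beta *: d01 f + ham lam f)
    & (forall (alpha beta : C) (lam : Lam C a b),
         (forall f, alpha *: d10 f + beta *: d01 f = ham lam f) ->
         alpha = 0 /\ beta = 0)].
Proof.
move=> ha hb; split.
- by split; [exact: d10_pd | split; [exact: d10X | exact: d10Y]].
- by split; [exact: d01_pd | split; [exact: d01X | exact: d01Y]].
- by move=> d pd; exact: spanning ha hb d pd.
- by move=> alpha beta lam; exact: independence ha hb alpha beta lam.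
Qed.
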